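(* Let $\{\mathcal G,(\Gamma_0,\Gamma_1),(\widetilde\Gamma_0,\widetilde\Gamma_1)\}$ be a triple for the adjoint pair $\{S,\widetilde S\}$ satisfying (G), (D) and (M). Then $\operatorname{dom}S=\ker\widetilde\Gamma_0\cap\ker\widetilde\Gamma_1$ and $\operatorname{dom}\widetilde S=\ker\Gamma_0\cap\ker\Gamma_1$.
   Context: Let $\mathfrak H$ be a separable Hilbert space. An adjoint pair $\{S,\widetilde S\}$ consists of densely defined closed operators $S,\widetilde S$ in $\mathfrak H$ with $(Sf,g)=(f,\widetilde Sg)$ for all $f\in\operatorname{dom}S$, $g\in\operatorname{dom}\widetilde S$. Fix operators $T\subset S^*$ and $\widetilde T\subset\widetilde S^*$ which are cores, i.e. $\overline T=S^*$ and $\overline{\widetilde T}=\widetilde S^*$ (equivalently $T^*=S$, $\widetilde T^*=\widetilde S$). A triple $\{\mathcal G,(\Gamma_0,\Gamma_1),(\widetilde\Gamma_0,\widetilde\Gamma_1)\}$ for $\{S,\widetilde S\}$ consists of a Hilbert space $\mathcal G$ and linear maps $\Gamma_0,\Gamma_1:\operatorname{dom}T\to\mathcal G$, $\widetilde\Gamma_0,\widetilde\Gamma_1:\operatorname{dom}\widetilde T\to\mathcal G$. Put $A_0:=T\upharpoonright\ker\Gamma_0$ and $\widetilde A_0:=\widetilde T\upharpoonright\ker\widetilde\Gamma_0$. Conditions: (G) $(Tf,g)_{\mathfrak H}-(f,\widetilde Tg)_{\mathfrak H}=(\Gamma_1f,\widetilde\Gamma_0g)_{\mathcal G}-(\Gamma_0f,\widetilde\Gamma_1g)_{\mathcal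 G}$ for all $f\in\operatorname{dom}T$, $g\in\operatorname{dom}\widetilde T$; (D) $\operatorname{ran}\Gamma_0$ and $\operatorname{ran}\widetilde\Gamma_0$ are dense in $\mathcal G$; (M) $A_0^*=\widetilde A_0$ and $\widetilde A_0^*=A_0$. *)

From HB Require Import structures.
From mathcomp Require Import all_boot all_order all_algebra.
From mathcomp Require Import all_classical all_reals all_analysis.
From mathcomp Require Import complex.
Set Implicit Arguments. Unset Strict Implicit. Unset Printing Implicit Defensive.
Import Order.TTheory GRing.Theory Num.Theory.
Import numFieldNormedType.Exports.
Local Open Scope classical_set_scope.
Local Open Scope ring_scope.

Record is_inner_product (R : realType) (H : completeNormedModType R[i])
    (ip : H -> H -> R[i]) : Prop := IsInnerProduct {
  ip_linear : forall (a : R[i]) (x y z : H),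
      ip (a *: x + y) z = a * ip x z + ip y z;
  ip_conj : forall x y : H, ip y x = (ip x y)^*;
  ip_norm : forall x : H, ip x x = `|x| ^+ 2 }.

Definition separable (T : topologicalType) :=
  exists D : set T, countable D /\ dense D.

Record op (H : Type) := Op { dom : set H; app : H -> H }.

Definition subspace (K : pzRingType) (V : lmodType K) (D : set V) :=
  D 0 /\ forall (a : K) x y, D x -> D y -> D (a *: x + y).

Definition linear_on (K : pzRingType) (V W : lmodType K) (D : set V)
    (f : V -> W) :=
  forall (a : K) x y, D x -> D y -> f (a *: x + y) = a *: f x + f y.

Definition is_op (K : pzRingType) (V : lmodType K) (A : op V) :=
  subspace (dom A) /\ linear_on (dom A) (app A).

Definition graph (H : Type) (A : op H) : set (H * H) :=
  [set p | dom A p.1 /\ p.2 = app A p.1].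

Definition densely_defined (T : topologicalType) (A : op T) := dense (dom A).

Definition closed_op (T : topologicalType) (A : op T) := closed (graph A).

(* The adjoint A^* : dom A^* = {g | exists h, forall f in dom A, (Af,g) = (f,h)},
   A^* g = that (unique, A densely defined) h. *)
Definition adjoint (R : realType) (H : completeNormedModType R[i])
    (ip : H -> H -> R[i]) (A : op H) : op H :=
  Op [set g | exists h, forall f, dom A f -> ip (app A f) g = ip f h]
     (fun g => xget 0 [set h | forall f, dom A f -> ip (app A f) g = ip f h]).

Definition op_restrict (H : Type) (A : op H) (D : set H) : op H :=
  Op (dom A `&` D) (app A).

(* For g in dom S, the inclusion T ⊂ S^* makes g a vector of dom A0^* with
   A0^* g = S g, so by (M) g lies in dom Ã0, i.e. Γ̃0 g = 0 and T̃ g = S g; then (G) reduces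
   to (Γ0 f, Γ̃1 g) = 0 for every f in dom T, and (D) gives Γ̃1 g = 0.  Conversely, if
   g ∈ dom T̃ with Γ̃0 g = Γ̃1 g = 0, then (G) says (T f, g) = (f, T̃ g) on dom T; as T is a
   core for S^* this extends to all of S^*, so g ∈ dom S^** = dom S.  The last equality is
   von Neumann's theorem for the closed operator S, proved by projecting (g, T̃ g) onto the
   closed graph of S in H × H.  The statement for S̃ is the same argument with the roles
   of the two sides exchanged. *)

From HB Require Import structures.
From mathcomp Require Import all_boot all_order all_algebra.
From mathcomp Require Import all_classical all_reals all_analysis.
From mathcomp Require Import complex.
From mathcomp Require Import ring lra.
Import Order.TTheory GRing.Theory Num.Theory.
Import numFieldNormedType.Exports.
Local Open Scope classical_set_scope.
Local Open Scope ring_scope.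

Set Implicit Arguments. Unset Strict Implicit.

Lemma closed_zero (R : realType) : closed [set 0 : (R[i] : numFieldType)].
Proof. exact/accessible_closed_set1/hausdorff_accessible/norm_hausdorff. Qed.

Section InnerProduct.
Variables (R : realType) (H : completeNormedModType R[i]) (ip : H -> H -> R[i]).
Hypothesis hip : is_inner_product ip.

Lemma ip0l z : ip 0 z = 0.
Proof.
have := ip_linear hip 1 0 0 z; rewrite scaler0 addr0 mul1r.
by move=> h; apply: (addrI (ip 0 z)); rewrite addr0 -h.
Qed.

Lemma ipDl x y z : ip (x + y) z = ip x z + ip y z.
Proof. by have := ip_linear hip 1 x y z; rewrite scale1r mul1r. Qed.

Lemma ipZl a x z : ip (a *: x) z = a * ip x z.
Proof. by have := ip_linear hip a x 0 z; rewrite addr0 ip0l addr0. Qed.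

Lemma ipNl x z : ip (- x) z = - ip x z.
Proof. by rewrite -scaleN1r ipZl mulN1r. Qed.

Lemma ipBl x y z : ip (x - y) z = ip x z - ip y z.
Proof. by rewrite ipDl ipNl. Qed.

Lemma ip_conj_eq a b c d : ip a b = ip c d -> ip b a = ip d c.
Proof. by rewrite (ip_conj hip a) (ip_conj hip c) => ->. Qed.

Lemma ipDr x y z : ip z (x + y) = ip z x + ip z y.
Proof. by rewrite !(ip_conj hip _ z) ipDl rmorphD. Qed.

Lemma ipZr a x z : ip z (a *: x) = a^* * ip z x.
Proof. by rewrite !(ip_conj hip _ z) ipZl rmorphM. Qed.

Lemma ip0r z : ip z 0 = 0.
Proof. by rewrite (ip_conj hip) ip0l rmorph0. Qed.

Lemma ipNr x z : ip z (- x) = - ip z x.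
Proof. by rewrite !(ip_conj hip _ z) ipNl rmorphN. Qed.

Lemma ipBr x y z : ip z (x - y) = ip z x - ip z y.
Proof. by rewrite ipDr ipNr. Qed.

Lemma ipxx_ge0 x : 0 <= ip x x.
Proof. by rewrite (ip_norm hip) exprn_ge0. Qed.

Lemma conj_ipxx x : (ip x x)^* = ip x x.
Proof. by rewrite (ip_norm hip) conj_Creal // rpredX // normr_real. Qed.

Lemma ipxx_eq0 x : ip x x = 0 -> x = 0.
Proof. by rewrite (ip_norm hip) => /eqP; rewrite expf_eq0 /= normr_eq0 => /eqP. Qed.

Lemma ip_norm_le x y : `|ip x y| <= `|x| * `|y|.
Proof.
have [->|y0] := eqVneq y 0; first by rewrite ip0r !normr0 mulr0.
set Q := ip y y; set c := ip x y.
have Q0 : 0 < Q by rewrite /Q (ip_norm hip) exprn_gt0 // normr_gt0.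
have := ipxx_ge0 (x - (c / Q) *: y).
rewrite ipBl !ipBr !ipZl !ipZr -/Q -/c [ip y x](ip_conj hip) -/c.
have -> : (c / Q)^* = c^* / Q by rewrite rmorphM fmorphV; congr (_ * _^-1); exact: conj_ipxx.
have -> : ip x x - c^* / Q * c - (c / Q * c^* - c / Q * (c^* / Q * Q))
   = ip x x - c * c^* / Q by field; rewrite lt0r_neq0.
rewrite subr_ge0 ler_pdivrMr // -normCK (ip_norm hip) /Q (ip_norm hip) -exprMn.
by rewrite ler_pXn2r // ?nnegrE ?mulr_ge0.
Qed.

Lemma continuous_ipl y : continuous (fun x => (ip x y : (R[i] : numFieldType))).
Proof.
move=> x0; apply/cvgrPdist_lt => e e0.
have y1 : 0 < `|y| + 1 by rewrite ltr_wpDl.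
apply/nbhs_normP; exists (e / (`|y| + 1)); first by rewrite /= divr_gt0.
move=> x /= Hx; rewrite -ipBl (le_lt_trans (ip_norm_le _ _)) //.
rewrite -(ltr_pM2r y1) divfK ?gt_eqF // in Hx.
by apply: le_lt_trans Hx; rewrite ler_wpM2l // lerDl.
Qed.

Lemma closed_ip_pair g k : closed [set p : H * H | ip p.2 g = ip p.1 k].
Proof.
have -> : [set p : H * H | ip p.2 g = ip p.1 k] =
    (fun p : H * H => (ip p.2 g - ip p.1 k : (R[i] : numFieldType))) @^-1` [set 0].
  apply/funext => p; apply/propext.
  by split => /= [->|/eqP]; [rewrite subrr|rewrite subr_eq0 => /eqP].
apply: preimage_closed (@closed_zero R) => p _; apply: cvgB.
  exact: (continuous_comp cvg_snd (@continuous_ipl _ _)).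
exact: (continuous_comp cvg_fst (@continuous_ipl _ _)).
Qed.

Lemma dense_ip_eq0 (D : set H) w : dense D -> (forall x, D x -> ip x w = 0) -> w = 0.
Proof.
move=> dD Dw; apply: ipxx_eq0; apply: contrapT => nw.
pose Z := (fun x => (ip x w : (R[i] : numFieldType))) @^-1` [set 0].
have cZ : closed Z by apply: preimage_closed (@closed_zero R) => x _; exact: continuous_ipl.
by have [x [/= + /Dw]] := dD (~` Z) (ex_intro _ w nw) (closed_openC cZ).
Qed.

Lemma apollonius (g x y : H) : `|x - y| ^+ 2
  = 2 * `|g - x| ^+ 2 + 2 * `|g - y| ^+ 2 - 4 * `|g - (2 : R[i])^-1 *: (x + y)| ^+ 2.
Proof.
rewrite -!(ip_norm hip) !(ipDl, ipDr, ipNl, ipNr, ipZl, ipZr).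
rewrite fmorphV rmorph_nat.
by field.
Qed.

End InnerProduct.

Section LinearOperator.
Variables (R : realType) (H : completeNormedModType R[i]) (S : op H).
Hypothesis S_op : is_op S.

Lemma op_dom0 : dom S 0. Proof. by case: S_op => [[]]. Qed.

Lemma op_domD x y : dom S x -> dom S y -> dom S (x + y).
Proof. by case: S_op => [[_ DS] _] Sx Sy; have := DS 1 _ _ Sx Sy; rewrite scale1r. Qed.

Lemma op_domZ (a : R[i]) x : dom S x -> dom S (a *: x).
Proof. by case: S_op => [[_ DS] _] Sx; have := DS a _ _ Sx op_dom0; rewrite addr0. Qed.

Lemma op_app0 : app S 0 = 0.
Proof.
case: S_op => [_ LS]; have := LS 1 _ _ op_dom0 op_dom0.
by rewrite !scale1r addr0 => h; apply: (addrI (app S 0)); rewrite addr0 -h.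
Qed.

Lemma op_appD x y : dom S x -> dom S y -> app S (x + y) = app S x + app S y.
Proof. by case: S_op => [_ LS] Sx Sy; have := LS 1 _ _ Sx Sy; rewrite !scale1r. Qed.

Lemma op_appZ (a : R[i]) x : dom S x -> app S (a *: x) = a *: app S x.
Proof.
by case: S_op => [_ LS] Sx; have := LS a _ _ Sx op_dom0; rewrite !addr0 op_app0 addr0.
Qed.

End LinearOperator.

Lemma gt0_complex_real (R : realType) (e : R[i]) :
  0 < e -> exists2 r : R, 0 < r & e = r%:C%C.
Proof.
move=> e0; have eRe : e = (complex.Re e)%:C%C.
  by rewrite {1}(complexE e) ger0_Im ?ltW // mulr0 addr0.
by exists (complex.Re e) => //; rewrite -ltcR -eRe.
Qed.

Lemma harmonic_cauchy_cvg (R : realType) (H : completeNormedModType R[i]) (c : nat -> H) :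
  (forall n m, `|c n - c m| ^+ 2 <= (2 * (n.+1%:R^-1 + m.+1%:R^-1))%:C%C) ->
  cvg (c @ \oo).
Proof.
move=> hc; apply/cauchy_cvgP/cauchy_exP => e e0.
have [r r0 er] := gt0_complex_real e0.
have r4 : 0 < r ^+ 2 / 4 by rewrite divr_gt0 // exprn_gt0.
have [N _ hN] := near_infty_natSinv_lt (PosNum r4).
exists (c N), N => // n /= Nn; rewrite -ball_normE /ball_ /=.
suff : `|c N - c n| ^+ 2 < e ^+ 2 by rewrite ltr_pXn2r // nnegrE ?normr_ge0 ?ltW.
apply: (le_lt_trans (hc N n)); rewrite er -rmorphXn ltcR.
have := hN N (leqnn _); have := hN n Nn; rewrite /=.
by move: (r ^+ 2) (N.+1%:R^-1) (n.+1%:R^-1) => q x y; lra.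
Qed.

Lemma cvg_sqnorm (R : realType) (H : completeNormedModType R[i]) (u : nat -> H) l :
  u @ \oo --> l -> (fun n => (`|u n| ^+ 2 : (R[i] : numFieldType))) @ \oo --> `|l| ^+ 2.
Proof. by move=> ul; exact: cvgM (cvg_norm ul) (cvg_norm ul). Qed.

Section GraphDistance.
Variables (R : realType) (H : completeNormedModType R[i]) (ip : H -> H -> R[i]).
Hypothesis hip : is_inner_product ip.
Variables (S : op H) (g k : H).
Hypothesis S_op : is_op S.

(* Squared distance from (g, k) to (x, S x) for the Hilbert norm of H × H (the normed
   structure of [H * H] carries the max norm instead). *)
Definition graph_dist2 (x : H) := `|g - x| ^+ 2 + `|k - app S x| ^+ 2.

Local Notation F := graph_dist2.

Lemma graph_dist2_ge0 x : 0 <= F x.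
Proof. by rewrite addr_ge0 // exprn_ge0. Qed.

Lemma graph_dist2_midpoint x y : dom S x -> dom S y ->
  `|x - y| ^+ 2 + `|app S x - app S y| ^+ 2
  = 2 * F x + 2 * F y - 4 * F ((2 : R[i])^-1 *: (x + y)).
Proof.
move=> Sx Sy; rewrite /F op_appZ ?op_appD //; last exact: op_domD.
by rewrite (apollonius hip g x y) (apollonius hip k (app S x)); ring.
Qed.

Lemma graph_dist2_inf : exists d : R, (forall x, dom S x -> d%:C%C <= F x) /\
  forall n : nat, exists2 x, dom S x & F x <= (d + n.+1%:R^-1)%:C%C.
Proof.
pose FR x := complex.Re (F x).
have FE x : F x = (FR x)%:C%C.
  by rewrite {1}(complexE (F x)) ger0_Im ?graph_dist2_ge0 // mulr0 addr0.
have hinf : has_inf [set FR x | x in dom S].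
  split; first by exists (FR 0), 0 => //; exact: op_dom0.
  by exists 0 => _ [x _ <-]; rewrite -lecR -FE graph_dist2_ge0.
exists (inf [set FR x | x in dom S]); split => [x Sx|n].
  by rewrite FE lecR; apply: (ge_inf hinf.2); exists x.
have n1 : 0 < (n.+1%:R : R)^-1 by rewrite invr_gt0 ltr0Sn.
have [_ [x Sx <-] lt_x] := inf_adherent n1 hinf.
by exists x => //; rewrite FE lecR ltW.
Qed.

(* A minimizing sequence is Cauchy by [graph_dist2_midpoint], and its limit stays in the
   graph because S is closed. *)
Lemma graph_dist2_has_min : closed_op S ->
  exists2 la, dom S la & forall x, dom S x -> F la <= F x.
Proof.
move=> S_cl; have [d [dF adh]] := graph_dist2_inf.
have /choice [a aP] : forall n, exists x, dom S x /\ F x <= (d + n.+1%:R^-1)%:C%C.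
  by move=> n; have [x] := adh n; exists x.
have Sa n : dom S (a n) := (aP n).1.
have bnd n m : `|a n - a m| ^+ 2 + `|app S (a n) - app S (a m)| ^+ 2
    <= (2 * (n.+1%:R^-1 + m.+1%:R^-1))%:C%C.
  rewrite graph_dist2_midpoint //.
  have Fmid := dF _ (op_domZ S_op 2^-1 (op_domD S_op (Sa n) (Sa m))).
  have two0 : 0 <= 2 :> R[i] := ler0n _ 2; have four0 : 0 <= 4 :> R[i] := ler0n _ 4.
  apply: le_trans (lerB (lerD (ler_wpM2l two0 (aP n).2) (ler_wpM2l two0 (aP m).2))
    (ler_wpM2l four0 Fmid)) _.
  by rewrite le_eqVlt; apply/orP; left; apply/eqP; rewrite !(rmorphM, rmorphD, rmorph1) /=; ring.
have ca : cvg (a @ \oo).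
  by apply: harmonic_cauchy_cvg => n m; apply: le_trans (bnd n m); rewrite lerDl exprn_ge0.
have cSa : cvg ((app S \o a) @ \oo).
  by apply: harmonic_cauchy_cvg => n m; apply: le_trans (bnd n m); rewrite lerDr exprn_ge0.
have [/= Sla Sa_lim] : graph S (lim (a @ \oo), lim ((app S \o a) @ \oo)).
  have near_graph : \forall n \near \oo, graph S (a n, app S (a n)).
    by apply: nearW => n; split => //; exact: Sa.
  by apply: (@closed_cvg _ _ _ _ _ (graph S) S_cl near_graph); exact: cvg_pair ca cSa.
exists (lim (a @ \oo)) => // x Sx.
have cF : (fun n => F (a n)) @ \oo --> F (lim (a @ \oo)).
  apply: cvgD; apply: cvg_sqnorm; apply: cvgB; [exact: cvg_cst|exact: ca|exact: cvg_cst|].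
  by rewrite -Sa_lim; exact: cSa.
have cd : (fun n => F (a n)) @ \oo --> (d%:C%C : (R[i] : numFieldType)).
  apply/cvgrPdist_lt => e e0; have [r r0 ->] := gt0_complex_real e0.
  have [N _ hN] := near_infty_natSinv_lt (PosNum r0).
  exists N => // n /= Nn; rewrite distrC ger0_norm ?subr_ge0 ?dF //.
  apply: le_lt_trans (_ : _ <= (n.+1%:R^-1)%:C%C) _; last by rewrite ltcR hN.
  by rewrite lerBlDl -rmorphD (aP n).2.
by rewrite -(norm_cvg_lim cF) (norm_cvg_lim cd); exact: dF.
Qed.

Lemma graph_dist2_min_orthogonal la : dom S la -> (forall x, dom S x -> F la <= F x) ->
  forall x, dom S x -> ip x (g - la) + ip (app S x) (k - app S la) = 0.
Proof.
move=> Sla Fmin x Sx; set u := g - la; set v := k - app S la.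
pose Q := ip x x + ip (app S x) (app S x).
have [Q0|Qnz] := eqVneq Q 0.
  move/eqP: Q0; rewrite paddr_eq0 ?ipxx_ge0 // => /andP[/eqP/(ipxx_eq0 hip) x0 _].
  by rewrite x0 op_app0 // !(ip0l hip) addr0.
have Qp : 0 < Q by rewrite lt_def Qnz addr_ge0 ?ipxx_ge0.
pose c := ip x u + ip (app S x) v.
have QC : Q^* = Q by rewrite rmorphD; congr (_ + _); exact: conj_ipxx.
have cC : c^* = (ip x u)^* + (ip (app S x) v)^* by exact: rmorphD.
have sC : (c^* / Q)^* = c / Q.
  by rewrite rmorphM fmorphV; congr (_ * _^-1); [exact: conjCK|exact: QC].
have Sy : dom S (la + (c^* / Q) *: x) by apply: op_domD; last exact: op_domZ.
have Fy : F (la + (c^* / Q) *: x) = F la - c * c^* / Q.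
  rewrite /graph_dist2 -/u -/v.
  have -> : g - (la + (c^* / Q) *: x) = u - (c^* / Q) *: x by rewrite opprD addrA.
  have -> : k - app S (la + (c^* / Q) *: x) = v - (c^* / Q) *: app S x.
    by rewrite op_appD ?op_appZ ?opprD ?addrA //; exact: op_domZ.
  clearbody u v; rewrite -!(ip_norm hip) !(ipBl hip, ipBr hip, ipZl hip, ipZr hip).
  rewrite (ip_conj hip x u) (ip_conj hip (app S x) v) sC cC /c /Q.
  by field.
have := Fmin _ Sy; rewrite Fy -subr_ge0 addrAC subrr add0r oppr_ge0 -normCK => c_le0.
have : `|c| ^+ 2 / Q = 0.
  by apply/eqP; rewrite eq_le c_le0 /=; apply: divr_ge0; [exact: exprn_ge0|exact: ltW].
by move/eqP; rewrite mulf_eq0 invr_eq0 (negbTE Qnz) orbF expf_eq0 /= normr_eq0 => /eqP.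
Qed.

End GraphDistance.

Section Adjoint.
Variables (R : realType) (H : completeNormedModType R[i]) (ip : H -> H -> R[i]).
Hypothesis hip : is_inner_product ip.

Lemma adjointP (A : op H) f : dom (adjoint ip A) f ->
  forall x, dom A x -> ip (app A x) f = ip x (app (adjoint ip A) f).
Proof.
move=> [h Ah].
by apply: (@xgetPex _ 0 [set h | forall x, dom A x -> ip (app A x) f = ip x h]); exists h.
Qed.

Lemma adjoint_app_eq (A : op H) f h : dense (dom A) ->
  (forall x, dom A x -> ip (app A x) f = ip x h) -> app (adjoint ip A) f = h.
Proof.
move=> dA Ah; have Af : dom (adjoint ip A) f by exists h.
apply/subr0_eq; apply: (dense_ip_eq0 hip dA) => x Ax.
by rewrite (ipBr hip) -adjointP // -Ah // subrr.
Qed.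

Lemma graph_sub_adjointP (T A : op H) f : graph T `<=` graph (adjoint ip A) ->
  dom T f -> forall x, dom A x -> ip (app A x) f = ip x (app T f).
Proof.
move=> TA Tf x Ax; have [/= Af ->] := TA (f, app T f) (conj Tf erefl).
exact: adjointP.
Qed.

(* The remainder (u, v) := (g, k) - (la, S la) of the projection onto the graph of S is
   orthogonal to that graph, i.e. S^* v = - u; the hypothesis then forces
   |u|^2 + |v|^2 = 0. *)
Lemma dom_closed_op_adjoint_orth (S : op H) g k :
  is_op S -> densely_defined S -> closed_op S ->
  (forall f h, graph (adjoint ip S) (f, h) -> ip h g = ip f k) -> dom S g.
Proof.
move=> S_op S_dd S_cl gk_orth.
have [la Sla Fmin] := graph_dist2_has_min hip g k S_op S_cl.
have orth := graph_dist2_min_orthogonal hip S_op Sla Fmin.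
set u := g - la in orth *; set v := k - app S la in orth *.
have Sv_u x : dom S x -> ip (app S x) v = ip x (- u).
  by move=> Sx; rewrite (ipNr hip); apply/eqP; rewrite -addr_eq0 addrC orth.
have /gk_orth : graph (adjoint ip S) (v, - u).
  by split; [exists (- u)|exact/esym/(adjoint_app_eq S_dd)].
move=> /(ip_conj_eq hip); rewrite (ipNr hip) => gu_kv.
have : ip u u + ip v v = 0.
  rewrite {1}/u {1}/v !(ipBl hip) addrACA -opprD orth // subr0.
  by rewrite -gu_kv addrN.
move/eqP; rewrite paddr_eq0 ?(ipxx_ge0 hip) // => /andP[/eqP/(ipxx_eq0 hip) u0 _].
by rewrite (subr0_eq u0).
Qed.

End Adjoint.

Lemma dom_closed_op_core_orth (R : realType) (H : completeNormedModType R[i])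
    (ip : H -> H -> R[i]) (S T : op H) g k :
  is_inner_product ip -> is_op S -> densely_defined S -> closed_op S ->
  closure (graph T) = graph (adjoint ip S) ->
  (forall f, dom T f -> ip (app T f) g = ip f k) -> dom S g.
Proof.
move=> hip S_op S_dd S_cl T_core Tgk.
apply: (dom_closed_op_adjoint_orth hip (k := k) S_op S_dd S_cl) => f h.
have : graph T `<=` [set p | ip p.2 g = ip p.1 k] by move=> [x _] [/= Tx ->]; exact: Tgk.
move/closureS; rewrite -((closure_id _).1 (closed_ip_pair hip (g:=g) (k:=k))) T_core; exact.
Qed.

Section BoundaryTriple.
Variables (R : realType) (H : completeNormedModType R[i]) (ip : H -> H -> R[i]).
Variables (G : completeNormedModType R[i]) (ipG : G -> G -> R[i]).
Hypotheses (hip : is_inner_product ip) (hG : is_inner_product ipG).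
Variables (S St T Tt : op H) (Gam0 Gam1 Gamt0 Gamt1 : H -> G).
Hypotheses (S_op : is_op S) (S_dd : densely_defined S) (S_cl : closed_op S).
Hypothesis St_dd : densely_defined St.
Hypothesis pair : forall f g, dom S f -> dom St g -> ip (app S f) g = ip f (app St g).
Hypotheses (T_sub : graph T `<=` graph (adjoint ip S))
  (Tt_sub : graph Tt `<=` graph (adjoint ip St))
  (T_core : closure (graph T) = graph (adjoint ip S)).
Hypothesis condG : forall f g, dom T f -> dom Tt g ->
  ip (app T f) g - ip f (app Tt g) = ipG (Gam1 f) (Gamt0 g) - ipG (Gam0 f) (Gamt1 g).
Hypothesis condD : dense (Gam0 @` dom T).
Hypothesis condM : graph (adjoint ip (op_restrict T [set f | Gam0 f = 0]))
  = graph (op_restrict Tt [set g | Gamt0 g = 0]).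

Lemma dom_sub_ker_boundary g : dom S g -> dom Tt g /\ Gamt0 g = 0 /\ Gamt1 g = 0.
Proof.
move=> Sg.
have TgS f : dom T f -> ip (app T f) g = ip f (app S g).
  by move=> Tf; apply: (ip_conj_eq hip); symmetry; exact: (graph_sub_adjointP T_sub Tf Sg).
have : graph (adjoint ip (op_restrict T [set f | Gam0 f = 0]))
    (g, app (adjoint ip (op_restrict T [set f | Gam0 f = 0])) g).
  by split => //; exists (app S g) => f [Tf _]; exact: TgS.
rewrite condM => -[/= [Ttg Gt0g] _].
have TtgS : app Tt g = app S g.
  apply/subr0_eq; apply: (dense_ip_eq0 hip St_dd) => x Stx.
  rewrite (ipBr hip) -(graph_sub_adjointP Tt_sub Ttg Stx).
  by rewrite (ip_conj_eq hip (pair Sg Stx)) subrr.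
split => //; split => //; apply: (dense_ip_eq0 hG condD) => _ [f Tf <-].
have := condG Tf Ttg; rewrite TtgS TgS // subrr Gt0g (ip0r hG) sub0r.
by move/eqP; rewrite eq_sym oppr_eq0 => /eqP.
Qed.

Lemma dom_eq_ker_boundary : dom S = [set g | dom Tt g /\ Gamt0 g = 0 /\ Gamt1 g = 0].
Proof.
apply/seteqP; split => [g|g [Ttg [Gt0g Gt1g]]]; first exact: dom_sub_ker_boundary.
apply: (dom_closed_op_core_orth (k := app Tt g) hip S_op S_dd S_cl T_core) => f Tf.
by apply/subr0_eq; rewrite condG // Gt0g Gt1g !(ip0r hG) subrr.
Qed.

End BoundaryTriple.
Theorem lemma2p4 (R : realType)
  (H : completeNormedModType R[i]) (ipH : H -> H -> R[i])
  (hH : is_inner_product ipH) (sepH : separable H)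
  (S St : op H)
  (S_op : is_op S) (St_op : is_op St)
  (S_dd : densely_defined S) (St_dd : densely_defined St)
  (S_cl : closed_op S) (St_cl : closed_op St)
  (pair : forall f g, dom S f -> dom St g -> ipH (app S f) g = ipH f (app St g))
  (T Tt : op H) (T_op : is_op T) (Tt_op : is_op Tt)
  (T_sub : graph T `<=` graph (adjoint ipH S))
  (Tt_sub : graph Tt `<=` graph (adjoint ipH St))
  (T_core : closure (graph T) = graph (adjoint ipH S))
  (Tt_core : closure (graph Tt) = graph (adjoint ipH St))
  (G : completeNormedModType R[i]) (ipG : G -> G -> R[i])
  (hG : is_inner_product ipG)
  (Gam0 Gam1 Gamt0 Gamt1 : H -> G)
  (Gam0_lin : linear_on (dom T) Gam0) (Gam1_lin : linear_on (dom T) Gam1)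
  (Gamt0_lin : linear_on (dom Tt) Gamt0) (Gamt1_lin : linear_on (dom Tt) Gamt1)
  (condG : forall f g, dom T f -> dom Tt g ->
     ipH (app T f) g - ipH f (app Tt g)
     = ipG (Gam1 f) (Gamt0 g) - ipG (Gam0 f) (Gamt1 g))
  (condD : dense (Gam0 @` dom T) /\ dense (Gamt0 @` dom Tt))
  (condM : graph (adjoint ipH (op_restrict T [set f | Gam0 f = 0]))
             = graph (op_restrict Tt [set g | Gamt0 g = 0])
        /\ graph (adjoint ipH (op_restrict Tt [set g | Gamt0 g = 0]))
             = graph (op_restrict T [set f | Gam0 f = 0])) :
  dom S = [set f | dom Tt f /\ Gamt0 f = 0 /\ Gamt1 f = 0] /\
  dom St = [set f | dom T f /\ Gam0 f = 0 /\ Gam1 f = 0].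
Proof.
have pair_sym f g : dom St f -> dom S g -> ipH (app St f) g = ipH f (app S g).
  by move=> Stf Sg; apply/esym/(ip_conj_eq hH)/pair.
have conjB (a b : R[i]) : (a - b)^* = a^* - b^* := rmorphB _ a b.
have condG_sym f g : dom Tt f -> dom T g ->
    ipH (app Tt f) g - ipH f (app T g) = ipG (Gamt1 f) (Gam0 g) - ipG (Gamt0 f) (Gam1 g).
  move=> Ttf Tg; have := congr1 Num.conj (condG g f Tg Ttf).
  rewrite !conjB -!(ip_conj hH) -!(ip_conj hG) => condG_conj.
  by apply: oppr_inj; rewrite !opprB; exact: condG_conj.
split.
  exact: (dom_eq_ker_boundary hH hG S_op S_dd S_cl St_dd pair T_sub Tt_sub T_core
    condG condD.1 condM.1).
exact: (dom_eq_ker_boundary hH hG St_op St_dd St_cl S_dd pair_sym Tt_sub T_sub Tt_core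
  condG_sym condD.2 condM.2).
Qed.
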